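(* Let $p$ be an odd prime, $\alpha>1$ any integer with $\gcd(p,\alpha)=1$, and $\gamma=\operatorname{ord}_p(\alpha)$. Then for all positive integers $a,n$ with $a\geq \gamma p$, $$S_p^n(a)\leq 8\,\big(\log_p a\big)^{n-1}\, a^{\log_p\left(\frac{p+1}{2}\right)} .$$
   Context: A base-$p$ digit $d\in\{0,\dots,p-1\}$ is called small if $d<p/2$ and large otherwise. For integers $a,n\ge1$, $S_p^n(a)=\#\{0\le s<a : \text{the base-}p\text{ representation of }\alpha^s\text{ contains fewer than } n \text{ large digits}\}$ (this depends on the fixed $\alpha$). *)

From Stdlib Require Import Arith Lia List Reals ZArith Znumtheory.
Import ListNotations.
Local Open Scope nat_scope.

(* Base-p digits of m (least significant first), p >= 2.  Fuel = m suffices. *)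
Fixpoint digits_aux (fuel p m : nat) : list nat :=
  match fuel with
  | 0 => []
  | S f => if Nat.eqb m 0 then [] else (m mod p) :: digits_aux f p (m / p)
  end.

Definition digits (p m : nat) : list nat := digits_aux m p m.

Definition is_large (p d : nat) : bool := Nat.leb p (2 * d).

Definition num_large (p m : nat) : nat :=
  length (filter (is_large p) (digits p m)).

Definition S_count (p alpha n a : nat) : nat :=
  length (filter (fun s => Nat.ltb (num_large p (alpha ^ s)) n) (seq 0 a)).

Definition is_mult_order (p alpha gamma : nat) : Prop :=
  0 < gamma /\ alpha ^ gamma mod p = 1 mod p /\
  (forall k, 0 < k < gamma -> alpha ^ k mod p <> 1 mod p).

Definition logb (p x : R) : R := ln x / ln p.

From Stdlib Require Import Arith Lia List Reals ZArith Znumtheory Lra.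

(* Write alpha^gamma = 1 + p^t w with p not dividing w.  By lifting the exponent
   (p odd), alpha^(s + gamma d) and alpha^s agree modulo p^(t+j) only when p^j
   divides d; hence, among exponents in one block of gamma p^j consecutive
   integers with a fixed residue mod gamma, the digits t, ..., t+j-1 of alpha^s
   are pairwise distinct.  Choosing gamma p^j <= a < gamma p^(j+1), every
   exponent counted by S_p^n(a) is thus determined by its block, its residue
   and a j-digit string with fewer than n large digits; there are at most
   ((p+1)/2)^j sum_(i<n) C(j,i) <= 2 ((p+1)/2)^j j^(n-1) such strings.  Finally
   ((p+1)/2)^j = (p^j)^c for c = log_p((p+1)/2), and 1 + x <= 2 x^c on [1, p]
   absorbs both the number of blocks and gamma. *)

Local Open Scope nat_scope.

Lemma mod_eq_divide_sub a b M : M <> 0 -> b <= a -> a mod M = b mod M ->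
  Nat.divide M (a - b).
Proof.
  intros HM Hba Hm. exists (a / M - b / M).
  pose proof (Nat.div_mod a M HM). pose proof (Nat.div_mod b M HM).
  assert (b / M <= a / M) by (apply Nat.Div0.div_le_mono; auto).
  rewrite Nat.mul_sub_distr_r. nia.
Qed.

Section PrimeModulus.

Variable p : nat.
Hypothesis p_prime : prime (Z.of_nat p).

Lemma prime_two_le : 2 <= p.
Proof. destruct p_prime as [H _]. lia. Qed.

Lemma prime_divide_mul a b :
  Nat.divide p (a * b) -> Nat.divide p a \/ Nat.divide p b.
Proof.
  assert (of_Z : forall m, (Z.of_nat p | Z.of_nat m)%Z -> Nat.divide p m).
  { intros m [z Hz]. pose proof prime_two_le. exists (Z.to_nat z).
    assert (0 <= z)%Z by nia.
    apply Nat2Z.inj. rewrite Nat2Z.inj_mul, Z2Nat.id; lia. }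
  intros [z Hz].
  destruct (prime_mult _ p_prime (Z.of_nat a) (Z.of_nat b)) as [Ha | Hb].
  - exists (Z.of_nat z). rewrite <- !Nat2Z.inj_mul, Hz. reflexivity.
  - left. exact (of_Z a Ha).
  - right. exact (of_Z b Hb).
Qed.

Section Coprime.

Variable alpha : nat.
Hypothesis alpha_coprime : Nat.gcd p alpha = 1.

Lemma prime_not_divide_pow k : ~ Nat.divide p (alpha ^ k).
Proof.
  pose proof prime_two_le. induction k as [|k IH]; simpl.
  - intros [z Hz]. destruct z; lia.
  - intros [Ha | Hk]%prime_divide_mul; [|exact (IH Hk)].
    assert (Hg : Nat.divide p (Nat.gcd p alpha))
      by (apply Nat.gcd_greatest; [apply Nat.divide_refl | exact Ha]).
    rewrite alpha_coprime in Hg. apply Nat.divide_1_r in Hg. lia.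
Qed.

Lemma prime_pow_divide_cancel s k m :
  Nat.divide (p ^ k) (alpha ^ s * m) -> Nat.divide (p ^ k) m.
Proof.
  pose proof prime_two_le. revert m. induction k as [|k IH]; intros m Hd.
  - apply Nat.divide_1_l.
  - assert (Hp : Nat.divide p (alpha ^ s * m)).
    { eapply Nat.divide_trans; [|exact Hd]. exists (p ^ k). simpl. lia. }
    destruct (prime_divide_mul _ _ Hp) as [Hs | [m' ->]].
    + exfalso. exact (prime_not_divide_pow s Hs).
    + assert (Hk : Nat.divide (p ^ k) m').
      { apply IH. destruct Hd as [z Hz]. exists z.
        apply (Nat.mul_cancel_r _ _ p); [lia|]. simpl in Hz. nia. }
      destruct Hk as [z Hz]. exists z. simpl. nia.
Qed.

Lemma pow_sub_mod_eq_one x y : alpha ^ x mod p = alpha ^ y mod p -> x <= y ->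
  alpha ^ (y - x) mod p = 1 mod p.
Proof.
  intros Heq Hxy. pose proof prime_two_le.
  assert (Hy : alpha ^ y = alpha ^ x * alpha ^ (y - x))
    by (rewrite <- Nat.pow_add_r; f_equal; lia).
  assert (Hpos : 1 <= alpha ^ (y - x)).
  { apply Nat.neq_0_lt_0, Nat.pow_nonzero. intros ->.
    rewrite Nat.gcd_0_r in alpha_coprime. lia. }
  apply eq_sym, mod_eq_divide_sub in Heq; [|lia|rewrite Hy; nia].
  replace (alpha ^ y - alpha ^ x) with (alpha ^ x * (alpha ^ (y - x) - 1)) in Heq
    by (rewrite Hy, Nat.mul_sub_distr_l; lia).
  rewrite <- (Nat.pow_1_r p) in Heq.
  apply prime_pow_divide_cancel in Heq. rewrite Nat.pow_1_r in Heq.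
  destruct Heq as [K HK]. replace (alpha ^ (y - x)) with (1 + K * p) by lia.
  rewrite Nat.Div0.mod_add. reflexivity.
Qed.

Lemma mult_order_le gamma : is_mult_order p alpha gamma -> gamma <= p.
Proof.
  intros [Hpos [_ Hmin]]. pose proof prime_two_le.
  assert (Hlen : length (map (fun k => alpha ^ k mod p) (seq 0 gamma))
                 <= length (seq 0 p)).
  { apply NoDup_incl_length.
    - apply NoDup_map_NoDup_ForallPairs; [|apply seq_NoDup].
      intros x y Hx Hy Heq. apply in_seq in Hx, Hy.
      destruct (Nat.lt_trichotomy x y) as [L | [L | L]]; [|exact L|].
      + exfalso. apply (Hmin (y - x)); [lia|]. apply pow_sub_mod_eq_one; auto; lia.
      + exfalso. apply (Hmin (x - y)); [lia|]. apply pow_sub_mod_eq_one; auto; lia.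
    - intros r Hr. apply in_map_iff in Hr. destruct Hr as [k [<- _]].
      apply in_seq. pose proof (Nat.mod_upper_bound (alpha ^ k) p). lia. }
  rewrite length_map, !length_seq in Hlen. exact Hlen.
Qed.

End Coprime.
End PrimeModulus.

Fixpoint triangular (i : nat) : nat :=
  match i with 0 => 0 | S i' => triangular i' + i' end.

Lemma triangular_double i : 2 * triangular i + i = i * i.
Proof. induction i; simpl; nia. Qed.

Lemma one_add_pow_mod_sqr x i : exists Y, (1 + x) ^ i = 1 + i * x + x * x * Y.
Proof.
  induction i as [|i [Y HY]].
  - exists 0. simpl. lia.
  - exists (Y + i + x * Y). rewrite Nat.pow_succ_r', HY. simpl. nia.
Qed.

Lemma one_add_pow_mod_cube x i :
  exists Y, (1 + x) ^ i = 1 + i * x + triangular i * x * x + x * x * x * Y.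
Proof.
  induction i as [|i [Y HY]].
  - exists 0. simpl. lia.
  - exists (Y + triangular i + x * Y). rewrite Nat.pow_succ_r', HY. simpl. nia.
Qed.

Section LiftingTheExponent.

Variable p : nat.
Hypothesis p_prime : prime (Z.of_nat p).
Hypothesis p_odd : Nat.odd p = true.

Lemma one_add_pow_not_prime_multiple t w d K : 1 <= t ->
  ~ Nat.divide p w -> ~ Nat.divide p d ->
  (1 + p ^ t * w) ^ d <> 1 + p ^ (t + 1) * K.
Proof.
  intros Ht Hw Hd HE. pose proof (prime_two_le _ p_prime).
  destruct (one_add_pow_mod_sqr (p ^ t * w) d) as [Y HY]. rewrite HY in HE.
  destruct t as [|t]; [lia|].
  assert (Hq : 0 < p ^ t) by (apply Nat.neq_0_lt_0, Nat.pow_nonzero; lia).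
  rewrite Nat.add_1_r, !Nat.pow_succ_r' in HE.
  assert (E : p * K = d * w + p * (p ^ t * w * w * Y)).
  { apply (Nat.mul_cancel_l _ _ (p * p ^ t)); [nia|]. nia. }
  assert (Hdw : Nat.divide p (d * w)).
  { apply (Nat.divide_add_cancel_r _ (p * (p ^ t * w * w * Y))).
    - apply Nat.divide_factor_l.
    - rewrite Nat.add_comm, <- E. apply Nat.divide_factor_l. }
  destruct (prime_divide_mul _ p_prime _ _ Hdw); tauto.
Qed.

(* The binomial term C(p,2) x^2 vanishes modulo p^(t+2) only because p is odd. *)
Lemma one_add_pow_prime t w : 1 <= t ->
  exists z, (1 + p ^ t * w) ^ p = 1 + p ^ (t + 1) * (w + p * z).
Proof.
  intros Ht. destruct (one_add_pow_mod_cube (p ^ t * w) p) as [Y HY].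
  destruct (proj1 (Nat.odd_spec p) p_odd) as [k Hk].
  assert (Htri : triangular p = p * k) by (pose proof (triangular_double p); nia).
  destruct t as [|t]; [lia|].
  exists (k * p ^ t * w * w + p ^ t * p ^ t * w * w * w * Y).
  rewrite HY, Htri, Nat.add_1_r, !Nat.pow_succ_r'. ring.
Qed.

Lemma one_add_pow_divide j : forall t w d K, 1 <= t -> ~ Nat.divide p w ->
  (1 + p ^ t * w) ^ d = 1 + p ^ (t + j) * K -> Nat.divide (p ^ j) d.
Proof.
  pose proof (prime_two_le _ p_prime).
  induction j as [|j IH]; intros t w d K Ht Hw HE.
  - apply Nat.divide_1_l.
  - assert (Hd : Nat.divide p d).
    { destruct (Nat.eq_dec (d mod p) 0) as [E | E].
      - apply Nat.Lcm0.mod_divide. exact E.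
      - exfalso. apply (one_add_pow_not_prime_multiple t w d (p ^ j * K) Ht Hw).
        + intros Hd. apply Nat.Lcm0.mod_divide in Hd. lia.
        + rewrite HE, Nat.mul_assoc, <- Nat.pow_add_r. do 3 f_equal. lia. }
    destruct Hd as [d' ->].
    destruct (one_add_pow_prime t w Ht) as [z Hz].
    assert (Hd' : Nat.divide (p ^ j) d').
    { apply (IH (t + 1) (w + p * z) d' K); [lia| |].
      - intros Hd. apply Hw. apply (Nat.divide_add_cancel_r _ (p * z)).
        + apply Nat.divide_factor_l.
        + rewrite Nat.add_comm. exact Hd.
      - rewrite <- Hz, <- Nat.pow_mul_r, (Nat.mul_comm p d'), HE.
        do 3 f_equal. lia. }
    destruct Hd' as [e ->]. exists e. simpl. ring.
Qed.

End LiftingTheExponent.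

Section LowDigits.

Variable p : nat.
Hypothesis p_ge2 : 2 <= p.

Fixpoint num_large_low (j D : nat) : nat :=
  match j with
  | 0 => 0
  | S j' => (if is_large p (D mod p) then 1 else 0) + num_large_low j' (D / p)
  end.

Lemma num_large_low_0 j : num_large_low j 0 = 0.
Proof.
  induction j as [|j IH]; simpl; auto.
  rewrite Nat.Div0.mod_0_l, Nat.Div0.div_0_l, IH. unfold is_large.
  destruct (Nat.leb_spec p (2 * 0)); lia.
Qed.

Lemma num_large_low_le_digits_aux f m j : m <= f ->
  num_large_low j m <= length (filter (is_large p) (digits_aux f p m)).
Proof.
  revert m j. induction f as [|f IH]; intros m j Hm.
  - replace m with 0 by lia. rewrite num_large_low_0. lia.
  - simpl. destruct (Nat.eqb_spec m 0) as [-> | Hm0].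
    + rewrite num_large_low_0. lia.
    + destruct j as [|j]; [simpl; lia|]. simpl.
      assert (Hdiv : m / p <= f) by (pose proof (Nat.div_lt m p); lia).
      specialize (IH (m / p) j Hdiv).
      destruct (is_large p (m mod p)); simpl; lia.
Qed.

Lemma num_large_low_add t j m :
  num_large_low (t + j) m = num_large_low t m + num_large_low j (m / p ^ t).
Proof.
  revert m. induction t as [|t IH]; intros m; cbn [Nat.add num_large_low Nat.pow].
  - rewrite Nat.div_1_r. reflexivity.
  - rewrite IH, Nat.Div0.div_div. lia.
Qed.

Lemma num_large_low_mod j D : num_large_low j (D mod p ^ j) = num_large_low j D.
Proof.
  revert D. induction j as [|j IH]; intros D; simpl; auto.
  rewrite Nat.Div0.mod_mul_r.
  assert (Hlt : D mod p < p) by (apply Nat.mod_upper_bound; lia).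
  rewrite (Nat.mul_comm p), Nat.Div0.mod_add, Nat.Div0.mod_mod, Nat.div_add by lia.
  rewrite (Nat.div_small (D mod p)), Nat.add_0_l, IH; auto.
Qed.

Lemma num_large_low_window_le t j m :
  num_large_low j ((m / p ^ t) mod p ^ j) <= num_large p m.
Proof.
  rewrite num_large_low_mod.
  eapply Nat.le_trans; [|apply (num_large_low_le_digits_aux m m (t + j)); lia].
  rewrite num_large_low_add. lia.
Qed.

End LowDigits.

Lemma filter_seq_length_le (f : nat -> bool) m lo k :
  (forall d, d < m -> f d = true -> lo <= d < lo + k) ->
  length (filter f (seq 0 m)) <= k.
Proof.
  intros Hf. rewrite <- (length_seq k lo).
  apply NoDup_incl_length; [apply NoDup_filter, seq_NoDup|].
  intros d [Hd Hfd]%filter_In. apply in_seq in Hd. apply in_seq, Hf; auto; lia.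
Qed.

(* [sum_binom_lt j n] is the sum of the binomial coefficients C(j, i) for i < n. *)
Fixpoint sum_binom_lt (j n : nat) : nat :=
  match j, n with
  | 0, 0 => 0
  | 0, S _ => 1
  | S _, 0 => 0
  | S j', S n' => sum_binom_lt j' (S n') + sum_binom_lt j' n'
  end.

Lemma sum_binom_lt_le j n : 1 <= j -> sum_binom_lt j (S n) <= 2 * j ^ n.
Proof.
  intros Hj. induction Hj as [|j Hj IH] in n |- *.
  - rewrite Nat.pow_1_l. destruct n; simpl; lia.
  - destruct n as [|n].
    + assert (H1 : forall i, sum_binom_lt i 1 = 1)
        by (induction i as [|[|i] IHi]; simpl in *; lia).
      rewrite H1. simpl. lia.
    + cbn [sum_binom_lt]. pose proof (IH (S n)). pose proof (IH n).
      assert (j ^ n <= S j ^ n) by (apply Nat.pow_le_mono_l; lia).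
      rewrite !Nat.pow_succ_r' in *. nia.
Qed.

Section FewLargeResidues.

Variable p : nat.
Hypothesis p_ge2 : 2 <= p.

Definition few_large_residues (j n : nat) : list nat :=
  filter (fun D => num_large_low p j D <? n) (seq 0 (p ^ j)).

Lemma in_few_large_residues j n D :
  In D (few_large_residues j n) <-> D < p ^ j /\ num_large_low p j D < n.
Proof.
  unfold few_large_residues. rewrite filter_In, in_seq, Nat.ltb_lt. lia.
Qed.

Let half_bounds : p + 1 <= 2 * ((p + 1) / 2) + 1 /\ 2 * ((p + 1) / 2) <= p + 1.
Proof.
  pose proof (Nat.div_mod (p + 1) 2). pose proof (Nat.mod_upper_bound (p + 1) 2). lia.
Qed.

Let small_digits := filter (fun d => negb (is_large p d)) (seq 0 p).
Let large_digits := filter (is_large p) (seq 0 p).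

Lemma length_small_digits : length small_digits <= (p + 1) / 2.
Proof.
  apply (filter_seq_length_le _ _ 0). intros d Hd. pose proof half_bounds.
  unfold is_large. destruct (Nat.leb_spec p (2 * d)); cbn [negb]; [discriminate | lia].
Qed.

Lemma length_large_digits : length large_digits <= (p + 1) / 2.
Proof.
  apply (filter_seq_length_le _ _ ((p + 1) / 2)). intros d Hd. pose proof half_bounds.
  unfold is_large. destruct (Nat.leb_spec p (2 * d)); cbn [negb]; [lia | discriminate].
Qed.

Lemma few_large_residues_succ_incl j n :
  incl (map (fun D => (D mod p, D / p)) (few_large_residues (S j) (S n)))
       (list_prod small_digits (few_large_residues j (S n)) ++
        list_prod large_digits (few_large_residues j n)).
Proof.
  intros [d D'] [D [[= <- <-] [HD Hlarge]%in_few_large_residues]]%in_map_iff.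
  simpl in Hlarge. apply in_app_iff.
  assert (Hd : D mod p < p) by (apply Nat.mod_upper_bound; lia).
  assert (HD' : D / p < p ^ j)
    by (apply Nat.Div0.div_lt_upper_bound; rewrite <- Nat.pow_succ_r'; exact HD).
  unfold small_digits, large_digits.
  destruct (is_large p (D mod p)) eqn:El; [right | left];
    apply in_prod; rewrite ?filter_In, ?in_seq, ?El, ?in_few_large_residues; lia.
Qed.

Lemma few_large_residues_length j n :
  length (few_large_residues j n) <= ((p + 1) / 2) ^ j * sum_binom_lt j n.
Proof.
  induction j as [|j IH] in n |- *.
  - destruct n; simpl; lia.
  - destruct n as [|n].
    + apply (filter_seq_length_le _ _ 0). intros D _ HD. apply Nat.ltb_lt in HD. lia.
    + assert (Hinj :
        NoDup (map (fun D => (D mod p, D / p)) (few_large_residues (S j) (S n)))).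
      { apply NoDup_map_NoDup_ForallPairs; [|apply NoDup_filter, seq_NoDup].
        intros x y _ _ [= Hm Hq].
        rewrite (Nat.div_mod x p), (Nat.div_mod y p) by lia. congruence. }
      pose proof (NoDup_incl_length Hinj (few_large_residues_succ_incl j n)) as Hlen.
      rewrite length_map, length_app, !length_prod in Hlen.
      pose proof length_small_digits. pose proof length_large_digits.
      pose proof (IH (S n)). pose proof (IH n).
      cbn [sum_binom_lt]. rewrite Nat.pow_succ_r'. nia.
Qed.

End FewLargeResidues.

Section PowerWindows.

Variables p alpha gamma t w : nat.
Hypothesis p_prime : prime (Z.of_nat p).
Hypothesis p_odd : Nat.odd p = true.
Hypothesis alpha_coprime : Nat.gcd p alpha = 1.
Hypothesis gamma_pos : 0 < gamma.
Hypothesis t_pos : 1 <= t.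
Hypothesis w_coprime : ~ Nat.divide p w.
Hypothesis alpha_pow_gamma : alpha ^ gamma = 1 + p ^ t * w.

Lemma pow_add_period s d : alpha ^ (s + gamma * d) = alpha ^ s * (1 + p ^ t * w) ^ d.
Proof. rewrite Nat.pow_add_r, Nat.pow_mul_r, alpha_pow_gamma. reflexivity. Qed.

Lemma pow_add_period_mod_low s d :
  alpha ^ (s + gamma * d) mod p ^ t = alpha ^ s mod p ^ t.
Proof.
  destruct (one_add_pow_mod_sqr (p ^ t * w) d) as [Y HY].
  rewrite pow_add_period, HY.
  replace (alpha ^ s * (1 + d * (p ^ t * w) + p ^ t * w * (p ^ t * w) * Y))
    with (alpha ^ s + (alpha ^ s * (d * w + w * (p ^ t * w) * Y)) * p ^ t) by ring.
  apply Nat.Div0.mod_add.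
Qed.

Lemma pow_add_period_mod_divide s d j :
  alpha ^ (s + gamma * d) mod p ^ (t + j) = alpha ^ s mod p ^ (t + j) ->
  Nat.divide (p ^ j) d.
Proof.
  intros Heq. pose proof (prime_two_le _ p_prime).
  assert (Hge : 1 <= (1 + p ^ t * w) ^ d)
    by (apply Nat.neq_0_lt_0, Nat.pow_nonzero; lia).
  apply mod_eq_divide_sub in Heq; [|apply Nat.pow_nonzero; lia|rewrite pow_add_period; nia].
  rewrite pow_add_period in Heq.
  replace (alpha ^ s * (1 + p ^ t * w) ^ d - alpha ^ s)
    with (alpha ^ s * ((1 + p ^ t * w) ^ d - 1)) in Heq
    by (rewrite Nat.mul_sub_distr_l; lia).
  apply prime_pow_divide_cancel in Heq; auto.
  destruct Heq as [K HK].
  apply (one_add_pow_divide p p_prime p_odd j t w d K t_pos w_coprime). lia.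
Qed.

Lemma pow_window_inj j s1 s2 : s1 <= s2 ->
  s1 / (gamma * p ^ j) = s2 / (gamma * p ^ j) -> s1 mod gamma = s2 mod gamma ->
  (alpha ^ s1 / p ^ t) mod p ^ j = (alpha ^ s2 / p ^ t) mod p ^ j -> s1 = s2.
Proof.
  intros Hle Hblock Hres Hwin. pose proof (prime_two_le _ p_prime).
  assert (Hpj : 0 < p ^ j) by (apply Nat.neq_0_lt_0, Nat.pow_nonzero; lia).
  set (d := s2 / gamma - s1 / gamma).
  assert (Hs2 : s2 = s1 + gamma * d).
  { pose proof (Nat.div_mod s1 gamma ltac:(lia)).
    pose proof (Nat.div_mod s2 gamma ltac:(lia)).
    assert (s1 / gamma <= s2 / gamma) by (apply Nat.Div0.div_le_mono; auto).
    unfold d. nia. }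
  assert (Hd : d < p ^ j).
  { set (P := gamma * p ^ j) in *.
    pose proof (Nat.div_mod s1 P ltac:(lia)). pose proof (Nat.div_mod s2 P ltac:(lia)).
    pose proof (Nat.mod_upper_bound s1 P ltac:(lia)).
    pose proof (Nat.mod_upper_bound s2 P ltac:(lia)).
    assert (gamma * d < gamma * p ^ j) by (unfold P in *; nia). nia. }
  assert (Hcong : alpha ^ (s1 + gamma * d) mod p ^ (t + j) = alpha ^ s1 mod p ^ (t + j)).
  { rewrite (Nat.pow_add_r p t j), !Nat.Div0.mod_mul_r, pow_add_period_mod_low,
      <- Hs2, Hwin.
    reflexivity. }
  destruct (pow_add_period_mod_divide s1 d j Hcong) as [e He].
  assert (e = 0) by nia. subst e. lia.
Qed.

Lemma S_count_le_windows j n a :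
  S_count p alpha n a <=
  ((a - 1) / (gamma * p ^ j) + 1) * gamma * length (few_large_residues p j n).
Proof.
  pose proof (prime_two_le _ p_prime).
  assert (Hpj : 0 < p ^ j) by (apply Nat.neq_0_lt_0, Nat.pow_nonzero; lia).
  set (key := fun s => ((s / (gamma * p ^ j), s mod gamma), (alpha ^ s / p ^ t) mod p ^ j)).
  set (l := filter (fun s => num_large p (alpha ^ s) <? n) (seq 0 a)).
  assert (Hinj : NoDup (map key l)).
  { apply NoDup_map_NoDup_ForallPairs; [|apply NoDup_filter, seq_NoDup].
    intros x y _ _ [= H1 H2 H3].
    destruct (Nat.le_ge_cases x y).
    - exact (pow_window_inj j x y ltac:(assumption) H1 H2 H3).
    - symmetry. exact (pow_window_inj j y x ltac:(assumption)
                         (eq_sym H1) (eq_sym H2) (eq_sym H3)). }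
  assert (Hincl : incl (map key l)
    (list_prod (list_prod (seq 0 ((a - 1) / (gamma * p ^ j) + 1)) (seq 0 gamma))
               (few_large_residues p j n))).
  { intros k [s [<- [Hs Hlarge]%filter_In]]%in_map_iff.
    apply in_seq in Hs. apply Nat.ltb_lt in Hlarge.
    assert (s / (gamma * p ^ j) <= (a - 1) / (gamma * p ^ j))
      by (apply Nat.Div0.div_le_mono; lia).
    pose proof (Nat.mod_upper_bound s gamma ltac:(lia)).
    pose proof (Nat.mod_upper_bound (alpha ^ s / p ^ t) (p ^ j) ltac:(lia)).
    pose proof (num_large_low_window_le p ltac:(lia) t j (alpha ^ s)).
    apply in_prod; [apply in_prod|]; rewrite ?in_seq, ?in_few_large_residues; lia. }
  pose proof (NoDup_incl_length Hinj Hincl) as Hlen.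
  rewrite length_map, !length_prod, !length_seq in Hlen. exact Hlen.
Qed.

End PowerWindows.

Lemma pow_mul_not_divide_decomp p : 2 <= p ->
  forall m, 0 < m -> exists t w, m = p ^ t * w /\ ~ Nat.divide p w.
Proof.
  intros Hp m. induction m as [m IH] using lt_wf_ind. intros Hm.
  destruct (Nat.eq_dec (m mod p) 0) as [E | E].
  - assert (Hd : m = p * (m / p)) by (pose proof (Nat.div_mod m p ltac:(lia)); lia).
    destruct (IH (m / p)) as [t [w [Ht Hw]]]; [apply Nat.div_lt; lia | nia |].
    exists (S t), w. split; [|exact Hw]. rewrite Hd, Ht. simpl. ring.
  - exists 0, m. split; [simpl; lia|]. intros Hd. apply E, Nat.Lcm0.mod_divide, Hd.
Qed.

Lemma pow_bracket p g a : 2 <= p -> 0 < g -> g <= a ->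
  exists j, g * p ^ j <= a < g * p ^ S j.
Proof.
  intros Hp Hg Ha. induction Ha as [|a Ha [j [Hj1 Hj2]]].
  - exists 0. simpl. nia.
  - destruct (Nat.eq_dec (S a) (g * p ^ S j)) as [E | E].
    + exists (S j). split; [lia|]. rewrite (Nat.pow_succ_r' p (S j)). nia.
    + exists j. lia.
Qed.

Lemma mult_order_pow_eq p alpha gamma : prime (Z.of_nat p) -> 1 < alpha ->
  is_mult_order p alpha gamma ->
  exists t w, 1 <= t /\ ~ Nat.divide p w /\ alpha ^ gamma = 1 + p ^ t * w.
Proof.
  intros Hp Halpha [Hpos [Hpow _]]. pose proof (prime_two_le _ Hp).
  assert (Hge : 2 <= alpha ^ gamma).
  { rewrite <- (Nat.pow_1_r 2). apply Nat.pow_le_mono; lia. }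
  rewrite (Nat.mod_small 1) in Hpow by lia.
  pose proof (Nat.div_mod (alpha ^ gamma) p ltac:(lia)) as Hdm.
  destruct (pow_mul_not_divide_decomp p ltac:(lia) (alpha ^ gamma - 1) ltac:(lia))
    as [t [w [Htw Hw]]].
  exists t, w. split; [|split; [exact Hw | lia]].
  destruct t as [|t]; [|lia].
  exfalso. apply Hw. exists (alpha ^ gamma / p). simpl in Htw. lia.
Qed.

Local Open Scope R_scope.

Lemma ln_le_ln x y : 0 < x -> x <= y -> ln x <= ln y.
Proof. intros Hx [Hlt | ->]; [left; apply ln_increasing; auto | right; reflexivity]. Qed.

Section Logarithms.

Variable P : R.
Hypothesis P_gt1 : 1 < P.

Let ln_P_pos : 0 < ln P.
Proof. rewrite <- ln_1. apply ln_increasing; lra. Qed.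

Lemma logb_le_logb x y : 0 < x -> x <= y -> logb P x <= logb P y.
Proof.
  intros Hx Hxy. unfold logb, Rdiv.
  apply Rmult_le_compat_r; [left; apply Rinv_0_lt_compat, ln_P_pos | apply ln_le_ln; auto].
Qed.

Lemma logb_pow j : logb P (P ^ j) = INR j.
Proof. apply Rlog_pow; lra. Qed.

Lemma Rpower_logb y : 0 < y -> Rpower P (logb P y) = y.
Proof. apply Rpower_Rlog; lra. Qed.

Lemma logb_unit_interval x : 1 <= x <= P -> 0 <= logb P x <= 1.
Proof.
  intros Hx. pose proof (logb_pow 0) as H0. pose proof (logb_pow 1) as H1.
  rewrite pow_O in H0. rewrite pow_1 in H1. simpl in H0, H1.
  pose proof (logb_le_logb 1 x). pose proof (logb_le_logb x P). lra.
Qed.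

End Logarithms.

(* Weighted AM-GM: [u^v 1^(1-v) <= v u + (1 - v) 1]. *)
Lemma Rpower_le_affine u v : 0 < u -> 0 <= v <= 1 -> Rpower u v <= 1 + v * (u - 1).
Proof.
  intros Hu Hv. unfold Rpower. rewrite <- (exp_ln u) at 2 by exact Hu.
  set (y := ln u). pose proof (exp_pos (v * y)) as Hpos.
  assert (Hup : exp (v * y) * (1 + (1 - v) * y) <= exp y).
  { replace y with (v * y + (1 - v) * y) at 3 by ring. rewrite exp_plus.
    apply Rmult_le_compat_l; [lra | apply exp_ineq1_le]. }
  assert (Hdown : exp (v * y) * (1 + - (v * y)) <= 1).
  { replace 1 with (exp (v * y) * exp (- (v * y))) at 2
      by (rewrite <- exp_plus, Rplus_opp_r; apply exp_0).
    apply Rmult_le_compat_l; [lra | apply exp_ineq1_le]. }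
  nra.
Qed.

(* With [c = log_P ((P+1)/2)] and [x = P^v], [1 + x <= 2 x^c] reads
   [(1/h)^v + (P/h)^v <= 2] for [h = (P+1)/2], a sum of two AM-GM bounds. *)
Lemma one_add_le_two_Rpower P x : 1 < P -> 1 <= x <= P ->
  1 + x <= 2 * Rpower x (logb P ((P + 1) / 2)).
Proof.
  intros HP Hx. set (h := (P + 1) / 2). set (v := logb P x).
  assert (Hh : 1 < h) by (unfold h; lra).
  pose proof (logb_unit_interval P HP x Hx) as Hv. fold v in Hv.
  assert (Hxv : x = Rpower P v) by (symmetry; apply Rpower_logb; lra).
  assert (Hhv : Rpower x (logb P h) = Rpower h v).
  { rewrite Hxv, Rpower_mult, Rmult_comm, <- Rpower_mult, Rpower_logb; lra. }
  assert (Hlow : Rpower (/ h) v * Rpower h v = 1).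
  { rewrite Rpower_mult_distr, Rinv_l by (apply Rinv_0_lt_compat || idtac; lra).
    unfold Rpower. rewrite ln_1, Rmult_0_r. apply exp_0. }
  assert (Hhigh : Rpower (P / h) v * Rpower h v = x).
  { rewrite Rpower_mult_distr by (unfold Rdiv; try apply Rmult_lt_0_compat;
      try apply Rinv_0_lt_compat; lra).
    rewrite Hxv. f_equal. field. lra. }
  pose proof (Rpower_le_affine (/ h) v ltac:(apply Rinv_0_lt_compat; lra) Hv).
  pose proof (Rpower_le_affine (P / h) v ltac:(unfold Rdiv; apply Rmult_lt_0_compat;
    [|apply Rinv_0_lt_compat]; lra) Hv).
  assert (Hsum : 1 + v * (/ h - 1) + (1 + v * (P / h - 1)) = 2) by (unfold h; field; lra).
  pose proof (exp_pos (v * ln h)) as Hpos. fold (Rpower h v) in Hpos.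
  rewrite Hhv. nra.
Qed.

Lemma sum_binom_lt_le_logb p a j n : (2 <= p)%nat -> (1 <= n)%nat ->
  (p <= a)%nat -> (p ^ j <= a)%nat ->
  INR (sum_binom_lt j n) <= 2 * logb (INR p) (INR a) ^ (n - 1).
Proof.
  intros Hp Hn Hpa Hpja. set (L := logb (INR p) (INR a)).
  assert (HP : 1 < INR p) by (apply (lt_INR 1); lia).
  assert (HL1 : 1 <= L).
  { pose proof (logb_pow (INR p) HP 1) as H1. rewrite pow_1 in H1. simpl in H1.
    rewrite <- H1. apply logb_le_logb; [lra | lra | apply le_INR; exact Hpa]. }
  assert (HjL : INR j <= L).
  { rewrite <- (logb_pow (INR p) HP j), <- pow_INR.
    apply logb_le_logb; [lra | apply lt_0_INR, Nat.neq_0_lt_0, Nat.pow_nonzero; lia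
                        | apply le_INR; exact Hpja]. }
  destruct n as [|n]; [lia|]. replace (S n - 1)%nat with n by lia.
  destruct j as [|j].
  - simpl. pose proof (pow_R1_Rle L n HL1). lra.
  - apply Rle_trans with (INR (2 * S j ^ n)); [apply le_INR, sum_binom_lt_le; lia|].
    rewrite mult_INR, pow_INR. apply Rmult_le_compat_l; [simpl; lra|].
    apply pow_incr. split; [apply pos_INR | exact HjL].
Qed.

Lemma windows_le_Rpower p gamma a j : (2 <= p)%nat -> (1 <= gamma <= p)%nat ->
  (gamma * p ^ j <= a < gamma * p ^ S j)%nat ->
  INR (((a - 1) / (gamma * p ^ j) + 1) * gamma) * ((INR p + 1) / 2) ^ j <=
  4 * Rpower (INR a) (logb (INR p) ((INR p + 1) / 2)).
Proof.
  intros Hp Hg [Hlo Hhi].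
  set (P := INR p). set (G := INR gamma). set (c := logb P ((P + 1) / 2)).
  set (Q := ((a - 1) / (gamma * p ^ j) + 1)%nat).
  assert (HP : 1 < P) by (apply (lt_INR 1); lia).
  assert (HG : 1 <= G <= P) by (split; [apply (le_INR 1) | apply le_INR]; lia).
  assert (HPj : 0 < P ^ j) by (apply pow_lt; lra).
  set (X := INR a / (G * P ^ j)).
  assert (HA : INR a = X * G * P ^ j) by (unfold X; field; lra).
  assert (HX : 1 <= X <= P).
  { assert (Hlo' : G * P ^ j <= INR a)
      by (unfold G, P; rewrite <- pow_INR, <- mult_INR; apply le_INR; exact Hlo).
    assert (Hhi' : INR a <= G * P ^ j * P)
      by (unfold G, P; rewrite <- pow_INR, <- !mult_INR; apply le_INR;
          rewrite Nat.pow_succ_r' in Hhi; lia).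
    split; apply (Rmult_le_reg_r (G * P ^ j)); nra. }
  assert (HQ : INR Q <= 1 + X).
  { assert (HQnat : (Q * (gamma * p ^ j) <= a + gamma * p ^ j)%nat).
    { unfold Q. pose proof (Nat.Div0.mul_div_le (a - 1) (gamma * p ^ j)). nia. }
    apply le_INR in HQnat. rewrite plus_INR, !mult_INR, pow_INR in HQnat.
    fold P G in HQnat. apply (Rmult_le_reg_r (G * P ^ j)); nra. }
  assert (Hhj : ((P + 1) / 2) ^ j = Rpower (P ^ j) c).
  { rewrite <- (Rpower_pow j P), Rpower_mult, Rmult_comm, <- Rpower_mult by lra.
    unfold c. rewrite Rpower_logb by lra. symmetry. apply Rpower_pow. lra. }
  assert (HAc : Rpower (INR a) c = Rpower X c * Rpower G c * Rpower (P ^ j) c).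
  { rewrite HA, !Rpower_mult_distr; nra. }
  pose proof (one_add_le_two_Rpower P X HP HX) as HXc.
  pose proof (one_add_le_two_Rpower P G HP HG) as HGc.
  pose proof (exp_pos (c * ln (P ^ j))) as HPjc. fold (Rpower (P ^ j) c) in HPjc.
  fold c in HXc, HGc |- *. rewrite mult_INR, Hhj, HAc. fold G.
  assert (HQ0 : 0 <= INR Q) by apply pos_INR.
  assert (INR Q * G <= 2 * Rpower X c * (2 * Rpower G c))
    by (apply Rmult_le_compat; lra).
  nra.
Qed.

Lemma INR_half_succ_odd p : Nat.odd p = true -> INR ((p + 1) / 2) = (INR p + 1) / 2.
Proof.
  intros Hodd. destruct (proj1 (Nat.odd_spec p) Hodd) as [k Hk].
  replace ((p + 1) / 2)%nat with (k + 1)%nat by (apply (Nat.div_unique _ _ _ 0); lia).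
  rewrite Hk, !plus_INR, mult_INR. simpl. field.
Qed.

Theorem theorem2p9 (p alpha gamma : nat) :
  prime (Z.of_nat p) -> Nat.odd p = true ->
  (1 < alpha)%nat -> Nat.gcd p alpha = 1%nat ->
  is_mult_order p alpha gamma ->
  forall a n : nat, (1 <= a)%nat -> (1 <= n)%nat -> (gamma * p <= a)%nat ->
  INR (S_count p alpha n a) <=
    8 * (logb (INR p) (INR a)) ^ (n - 1) *
    Rpower (INR a) (logb (INR p) ((INR p + 1) / 2)).
Proof.
  intros Hp Hodd Halpha Hcop Hord a n Ha Hn Hga.
  pose proof (prime_two_le _ Hp) as Hp2.
  pose proof (mult_order_le _ Hp _ Hcop _ Hord) as Hgp.
  pose proof (proj1 Hord) as Hg0.
  destruct (mult_order_pow_eq _ _ _ Hp Halpha Hord) as [t [w [Ht [Hw Hpow]]]].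
  destruct (pow_bracket p gamma a Hp2 Hg0 ltac:(nia)) as [j [Hj1 Hj2]].
  eapply Rle_trans.
  { apply le_INR. eapply Nat.le_trans;
      [exact (S_count_le_windows p alpha gamma t w Hp Hodd Hcop Hg0 Ht Hw Hpow j n a)|].
    apply Nat.mul_le_mono_l, few_large_residues_length. exact Hp2. }
  rewrite mult_INR, (mult_INR (_ ^ j)), pow_INR, (INR_half_succ_odd p Hodd).
  pose proof (windows_le_Rpower p gamma a j Hp2 ltac:(lia) (conj Hj1 Hj2)) as Hwin.
  pose proof (sum_binom_lt_le_logb p a j n Hp2 Hn ltac:(nia) ltac:(nia)) as Hbin.
  set (W := INR (((a - 1) / (gamma * p ^ j) + 1) * gamma)) in *.
  set (H := ((INR p + 1) / 2) ^ j) in *.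
  set (A := Rpower (INR a) (logb (INR p) ((INR p + 1) / 2))) in *.
  set (B := INR (sum_binom_lt j n)) in *.
  replace (W * (H * B)) with ((W * H) * B) by ring.
  replace (8 * _ * A) with (4 * A * (2 * logb (INR p) (INR a) ^ (n - 1))) by ring.
  apply Rmult_le_compat; [| apply pos_INR | exact Hwin | exact Hbin].
  apply Rmult_le_pos; [apply pos_INR | apply pow_le; pose proof (pos_INR p); lra].
Qed.
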